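(* Let $n\ge 4$ and let $A$ be one of the following complex Leibniz algebras with basis $\{h_1,h_2,e_1,\dots,e_n\}$: (a) $R(F_n^1)$: nonzero products $[e_i,e_1]=e_{i+1}$ ($2\le i\le n-1$), $[e_1,h_2]=e_1$, $[h_2,e_1]=-e_1$, $[e_i,h_1]=e_i$ ($2\le i\le n$), $[e_i,h_2]=(i-1)e_i$ ($2\le i\le n$); (b) $\mathcal L_1$: nonzero products $[e_1,e_1]=e_3$, $[e_i,e_1]=e_{i+1}$ ($3\le i\le n-1$), $[e_1,h_2]=e_1$, $[h_2,e_1]=-e_1$, $[e_2,h_1]=e_2$, $[h_1,e_2]=-e_2$, $[e_i,h_2]=(i-1)e_i$ ($3\le i\le n$); (c) $\mathcal L_2$: the same products as $\mathcal L_1$ except $[h_1,e_2]=0$. Then every biderivation of $A$ is inner, i.e. of the form $(-\mathrm{ad}_x,\mathrm{Ad}_x)$ for some $x\in A$.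
   Context: Leibniz algebras are right Leibniz over $\mathbb C$: $[x,[y,z]]=[[x,y],z]-[[x,z],y]$. Unlisted products are zero. A derivation is a linear $d$ with $d([x,y])=[d(x),y]+[x,d(y)]$; an anti-derivation is a linear $D$ with $D([x,y])=[D(x),y]-[D(y),x]$; a biderivation is a pair $(d,D)$ of a derivation and an anti-derivation with $[x,d(y)]=[x,D(y)]$ for all $x,y$. For $x\in A$, $\mathrm{ad}_x(y)=[y,x]$, $\mathrm{Ad}_x(y)=[x,y]$; $(-\mathrm{ad}_x,\mathrm{Ad}_x)$ is called an inner biderivation. *)

(* The ground field C is taken to be the complex numbers
   R[i] = complex R over an arbitrary realType R (every realType is the
   field of real numbers up to isomorphism, so R[i] is C). *)
From HB Require Import structures.
From mathcomp Require Import all_boot all_order all_algebra.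
From mathcomp Require Import reals complex.
Set Implicit Arguments. Unset Strict Implicit. Unset Printing Implicit Defensive.
Import Order.TTheory GRing.Theory Num.Theory.
Local Open Scope ring_scope.

(* The algebra has basis {h_1, h_2, e_1, ..., e_n}, realized as row vectors
   'rV[C]_(n.+2) with the convention: position 0 = h_1, position 1 = h_2,
   position k.+1 = e_k  (1 <= k <= n). *)

Inductive which_alg := RFn1 | Lie1 | Lie2.

Section Alg.
Variable R : realType.
Local Notation C := (R[i]).

Definition bv (n p : nat) : 'rV[C]_(n.+2) := delta_mx 0 (inord p).

Definition br (A : which_alg) (n a b : nat) : 'rV[C]_(n.+2) :=
  match A with
  | RFn1 =>
      if (3 <= a <= n)%N && (b == 2)%N then bv n a.+1            (* [e_i,e_1]=e_{i+1}, 2<=i<=n-1 *)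
      else if (a == 2)%N && (b == 1)%N then bv n 2               (* [e_1,h_2]=e_1 *)
      else if (a == 1)%N && (b == 2)%N then - bv n 2             (* [h_2,e_1]=-e_1 *)
      else if (3 <= a <= n.+1)%N && (b == 0)%N then bv n a       (* [e_i,h_1]=e_i, 2<=i<=n *)
      else if (3 <= a <= n.+1)%N && (b == 1)%N
           then (a - 2)%:R *: bv n a                             (* [e_i,h_2]=(i-1)e_i *)
      else 0
  | Lie1 | Lie2 =>
      if (a == 2)%N && (b == 2)%N then bv n 4                    (* [e_1,e_1]=e_3 *)
      else if (4 <= a <= n)%N && (b == 2)%N then bv n a.+1       (* [e_i,e_1]=e_{i+1}, 3<=i<=n-1 *)
      else if (a == 2)%N && (b == 1)%N then bv n 2               (* [e_1,h_2]=e_1 *)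
      else if (a == 1)%N && (b == 2)%N then - bv n 2             (* [h_2,e_1]=-e_1 *)
      else if (a == 3)%N && (b == 0)%N then bv n 3               (* [e_2,h_1]=e_2 *)
      else if (a == 0)%N && (b == 3)%N then
             (if A is Lie1 then - bv n 3 else 0)                 (* [h_1,e_2]=-e_2 in L_1, 0 in L_2 *)
      else if (4 <= a <= n.+1)%N && (b == 1)%N
           then (a - 2)%:R *: bv n a                             (* [e_i,h_2]=(i-1)e_i, 3<=i<=n *)
      else 0
  end.

Definition bracket (A : which_alg) (n : nat) (x y : 'rV[C]_(n.+2)) : 'rV[C]_(n.+2) :=
  \sum_(i < n.+2) \sum_(j < n.+2) (x 0 i * y 0 j) *: br A n i j.

(* linear maps are matrices acting on row vectors on the right: v |-> v *m M *)
Definition is_derivation A n (d : 'M[C]_(n.+2)) : Prop :=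
  forall x y, bracket A x y *m d = bracket A (x *m d) y + bracket A x (y *m d).

Definition is_antiderivation A n (D : 'M[C]_(n.+2)) : Prop :=
  forall x y, bracket A x y *m D = bracket A (x *m D) y - bracket A (y *m D) x.

Definition is_biderivation A n (d D : 'M[C]_(n.+2)) : Prop :=
  [/\ is_derivation A d, is_antiderivation A D &
      forall x y, bracket A x (y *m d) = bracket A x (y *m D)].

(* (-ad_x, Ad_x) with ad_x(y) = [y,x], Ad_x(y) = [x,y] *)
Definition is_inner_biderivation A n (d D : 'M[C]_(n.+2)) : Prop :=
  exists x : 'rV[C]_(n.+2), forall y,
    y *m d = - bracket A y x /\ y *m D = bracket A x y.

End Alg.

From HB Require Import structures.
From mathcomp Require Import all_boot all_order all_algebra.
From mathcomp Require Import reals complex.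
From mathcomp Require Import zify ring.
Set Implicit Arguments. Unset Strict Implicit. Unset Printing Implicit Defensive.
Import Order.TTheory GRing.Theory Num.Theory.
Local Open Scope ring_scope.

(* Expanding the bracket
   coordinatewise, the derivation identity, the anti-derivation identity and
   the compatibility [x, d y] = [x, D y], evaluated on pairs of basis vectors,
   become linear relations among the entries of d and D; well-chosen pairs
   give, up to a nonzero factor, relations involving one or two entries only.
   Solving them leaves as free parameters only entries that reappear as the
   coordinates of a vector x, and comparing entries then shows d = -ad_x and
   D = Ad_x. *)

Lemma big2_seq_support (V : nmodType) (I J : finType) (G : I -> J -> V)
    (P : seq (I * J)) :
  uniq P -> (forall i j, (i, j) \notin P -> G i j = 0) ->
  \sum_i \sum_j G i j = \sum_(p <- P) G p.1 p.2.
Proof.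
move=> uP G0; rewrite pair_big /= (bigID (mem P)) /= [X in _ + X]big1 ?addr0.
  by rewrite (big_uniq _ uP).
by move=> [i j] /= /negP ijNP; apply: G0; apply/negP.
Qed.

Lemma eq_of_lincomb (K : comPzRingType) (l r : K) (E : l = r) (c P Q : K) :
  P - Q = c * (l - r) -> P = Q.
Proof. by rewrite E subrr mulr0 => /eqP; rewrite subr_eq0 => /eqP. Qed.

Section Coordinates.
Variables (R : realType) (n : nat).
Local Notation C := (R[i]).
Local Notation V := 'rV[C]_(n.+2).

Definition coord (x : V) (k : nat) : C := x 0 (inord k).

Lemma inord_eqE a b : (a < n.+2)%N -> (b < n.+2)%N ->
  ((inord a : 'I_(n.+2)) == inord b) = (a == b).
Proof. by move=> ha hb; rewrite -val_eqE /= !inordK. Qed.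

Lemma bv_inord (i : 'I_(n.+2)) : bv R n i = delta_mx 0 i.
Proof. by rewrite /bv inord_val. Qed.

Lemma coord_bv a k : (a < n.+2)%N -> (k < n.+2)%N -> coord (bv R n a) k = (a == k)%:R.
Proof. by move=> ha hk; rewrite /coord /bv mxE /= inord_eqE // eq_sym. Qed.

Lemma coord_row (f : nat -> C) k : (k < n.+2)%N -> coord (\row_(j < n.+2) f j) k = f k.
Proof. by move=> hk; rewrite /coord mxE inordK. Qed.

Lemma coord_bv_mul a k (M : 'M[C]_(n.+2)) : coord (bv R n a *m M) k = M (inord a) (inord k).
Proof. by rewrite /coord /bv -rowE mxE. Qed.

Lemma coord_scale_bv_mul s a k (M : 'M[C]_(n.+2)) :
  coord ((s *: bv R n a) *m M) k = s * M (inord a) (inord k).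
Proof. by rewrite -scalemxAl /coord mxE -coord_bv_mul. Qed.

Lemma coord_opp_bv_mul a k (M : 'M[C]_(n.+2)) :
  coord ((- bv R n a) *m M) k = - M (inord a) (inord k).
Proof. by rewrite mulNmx /coord mxE -coord_bv_mul. Qed.

Lemma coord_0_mul k (M : 'M[C]_(n.+2)) : coord (0 *m M) k = 0.
Proof. by rewrite mul0mx /coord mxE. Qed.

Variable A : which_alg.

Lemma coord_bracket (x y : V) k : coord (bracket A x y) k =
  \sum_(i < n.+2) \sum_(j < n.+2) x 0 i * y 0 j * br R A n i j 0 (inord k).
Proof.
rewrite /coord /bracket summxE; apply: eq_bigr => i _; rewrite summxE.
by apply: eq_bigr => j _; rewrite mxE.
Qed.

Lemma bracket_sum_support (x y : V) k (P : seq (nat * nat)) :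
  uniq P -> all (fun p => (p.1 < n.+2)%N && (p.2 < n.+2)%N) P ->
  (forall i j : 'I_(n.+2), ((i : nat), (j : nat)) \notin P ->
     x 0 i * y 0 j * br R A n i j 0 (inord k) = 0) ->
  coord (bracket A x y) k = \sum_(p <- P)
     x 0 (inord p.1) * y 0 (inord p.2) * br R A n p.1 p.2 0 (inord k).
Proof.
move=> uP aP G0; rewrite coord_bracket.
pose inP p := ((inord p.1 : 'I_(n.+2)), (inord p.2 : 'I_(n.+2))).
rewrite (@big2_seq_support _ _ _ _ (map inP P)) ?big_map.
- by apply: eq_big_seq => p /(allP aP) /andP[h1 h2] /=; rewrite !inordK.
- rewrite map_inj_in_uniq // => [[a b] [c e]] /(allP aP) /= /andP[ha hb]
     /(allP aP) /= /andP[hc he] [] /(congr1 val) /= + /(congr1 val) /=.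
  by rewrite !inordK // => -> ->.
move=> i j ijN; apply: G0; apply: contra ijN => ijP.
by apply/mapP; exists ((i : nat), (j : nat)); rewrite //= /inP /= !inord_val.
Qed.

Lemma bracket_bv a b : (a < n.+2)%N -> (b < n.+2)%N ->
  bracket A (bv R n a) (bv R n b) = br R A n a b.
Proof.
move=> ha hb; apply/rowP => k; rewrite -[k]inord_val.
rewrite -[LHS]/(coord _ k) (@bracket_sum_support _ _ _ [:: (a, b)]) //=.
- by rewrite big_seq1 /bv !mxE !eqxx !mul1r.
- by rewrite ha hb.
move=> i j; rewrite inE xpair_eqE /bv !mxE /= => /nandP[] /negbTE ne.
  have -> : (i == inord a) = false by rewrite -val_eqE /= inordK.
  by rewrite !mul0r.
have -> : (j == inord b) = false by rewrite -val_eqE /= inordK.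
by rewrite mulr0 mul0r.
Qed.

Lemma bracket_linear_l a (u v w : V) :
  bracket A (a *: u + v) w = a *: bracket A u w + bracket A v w.
Proof.
rewrite /bracket scaler_sumr -big_split; apply: eq_bigr => i _.
rewrite scaler_sumr -big_split; apply: eq_bigr => j _.
by rewrite !mxE scalerA mulrDl mulrA scalerDl.
Qed.

Lemma bracket_linear_r a (u v w : V) :
  bracket A w (a *: u + v) = a *: bracket A w u + bracket A w v.
Proof.
rewrite /bracket scaler_sumr -big_split; apply: eq_bigr => i _.
rewrite scaler_sumr -big_split; apply: eq_bigr => j _.
by rewrite !mxE scalerA mulrDr [w 0 i * _]mulrCA scalerDl mulrA.
Qed.

Lemma bracket_suml (x y : V) :
  bracket A x y = \sum_(i < n.+2) x 0 i *: bracket A (bv R n i) y.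
Proof.
rewrite {1}(row_sum_delta x); elim/big_rec2: _ => [|i v w _ IH].
  by rewrite /bracket big1 // => i _; rewrite big1 // => j _; rewrite mxE mul0r scale0r.
by rewrite bracket_linear_l IH bv_inord.
Qed.

Lemma bracket_sumr (x y : V) :
  bracket A x y = \sum_(i < n.+2) y 0 i *: bracket A x (bv R n i).
Proof.
rewrite {1}(row_sum_delta y); elim/big_rec2: _ => [|i v w _ IH].
  by rewrite /bracket big1 // => i _; rewrite big1 // => j _; rewrite mxE mulr0 scale0r.
by rewrite bracket_linear_r IH bv_inord.
Qed.

Lemma inner_of_entries (d D : 'M[C]_(n.+2)) (x : V) :
  (forall i k, (i < n.+2)%N -> (k < n.+2)%N ->
     d (inord i) (inord k) = - coord (bracket A (bv R n i) x) k) ->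
  (forall i k, (i < n.+2)%N -> (k < n.+2)%N ->
     D (inord i) (inord k) = coord (bracket A x (bv R n i)) k) ->
  is_inner_biderivation A d D.
Proof.
move=> dE DE; exists x => y; split.
- rewrite mulmx_sum_row bracket_suml -sumrN; apply: eq_bigr => i _.
  rewrite -scalerN; congr (_ *: _); apply/rowP => j; rewrite !mxE.
  by have := dE i j (ltn_ord i) (ltn_ord j); rewrite /coord !inord_val.
- rewrite mulmx_sum_row bracket_sumr; apply: eq_bigr => i _.
  congr (_ *: _); apply/rowP => j; rewrite !mxE.
  by have := DE i j (ltn_ord i) (ltn_ord j); rewrite /coord !inord_val.
Qed.

Section BasisEquations.
Variables d D : 'M[C]_(n.+2).

Lemma coord_der_basis a b k : is_derivation A d ->
  (a < n.+2)%N -> (b < n.+2)%N ->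
  coord (br R A n a b *m d) k = coord (bracket A (bv R n a *m d) (bv R n b)) k
                              + coord (bracket A (bv R n a) (bv R n b *m d)) k.
Proof. by move=> dP ha hb; rewrite -bracket_bv // dP /coord mxE. Qed.

Lemma coord_antider_basis a b k : is_antiderivation A D ->
  (a < n.+2)%N -> (b < n.+2)%N ->
  coord (br R A n a b *m D) k = coord (bracket A (bv R n a *m D) (bv R n b)) k
                              - coord (bracket A (bv R n b *m D) (bv R n a)) k.
Proof. by move=> DP ha hb; rewrite -bracket_bv // DP /coord !mxE. Qed.

Lemma coord_compat_basis a b k :
  (forall x y, bracket A x (y *m d) = bracket A x (y *m D)) ->
  coord (bracket A (bv R n a) (bv R n b *m d)) k
  = coord (bracket A (bv R n a) (bv R n b *m D)) k.
Proof. by move=> dD; rewrite dD. Qed.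

End BasisEquations.
End Coordinates.

Ltac decide_nat_eqs := repeat match goal with |- context[(?a == ?b :> nat)] =>
  first [ rewrite (_ : (a == b :> nat) = false); last by lia
        | rewrite (_ : (a == b :> nat) = true); last by lia ] end.

Ltac decide_ifs := repeat match goal with |- context[if ?c then _ else _] =>
  first [ rewrite (_ : c = true); last by lia
        | rewrite (_ : c = false); last by lia ] end.

Ltac simpl_br :=
  rewrite /br; repeat (case: ifP => ?; try (exfalso; lia));
  rewrite ?mxE ?oppr0 ?scaler0; repeat (rewrite inord_eqE; [|lia|lia]);
  decide_nat_eqs; rewrite /= ?inordK; try lia;
  rewrite /= ?mulr1n ?mulr0n ?mulr0 ?mulr1 ?oppr0; try done.

(* [P] lists the pairs of basis positions that can contribute to the coordinate. *)
Ltac sum_on_support P :=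
  rewrite (bracket_sum_support (P := P));
  [ | by rewrite /= ?inE ?xpair_eqE ?andbT; try lia
    | by rewrite /= ?andbT; try lia
    | move=> ? ?; rewrite ?inE ?xpair_eqE /= => ?;
      apply/eqP; rewrite mulf_eq0; apply/orP; right; apply/eqP; simpl_br ];
  rewrite ?big_cons big_nil /=; simpl_br.

Section BracketFormulas.
Variables (R : realType) (n : nat).
Hypothesis n_ge3 : (3 <= n)%N.
Local Notation C := (R[i]).
Local Notation V := 'rV[C]_(n.+2).

Definition coordRF (x y : V) k :=
  if k == 2%N then coord x 2 * coord y 1 - coord x 1 * coord y 2
  else if (3 <= k)%N then (if (4 <= k)%N then coord x k.-1 * coord y 2 else 0)
        + coord x k * (coord y 0 + (k%:R - 2) * coord y 1) else 0.

Lemma coord_bracketRF x y k : (k < n.+2)%N -> coord (bracket RFn1 x y) k = coordRF x y k.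
Proof.
move=> hk; rewrite /coordRF.
case: (ltngtP k 2) => [k2|k2|->].
- decide_ifs; sum_on_support (@nil (nat * nat)).
- case: (ltngtP k 3) => [k3|k3|->].
  + lia.
  + decide_ifs; sum_on_support [:: (k.-1, 2); (k, 0); (k, 1)]%N.
    rewrite natrB; [|lia]; rewrite /coord; ring.
  + decide_ifs; sum_on_support [:: (3, 0); (3, 1)]%N.
    rewrite /coord; ring.
- sum_on_support [:: (2, 1); (1, 2)]%N.
  rewrite /coord; ring.
Qed.

Definition is_Lie1 (A : which_alg) := if A is Lie1 then true else false.

Definition coordL (e : bool) (x y : V) k :=
  if k == 2%N then coord x 2 * coord y 1 - coord x 1 * coord y 2
  else if k == 3%N then coord x 3 * coord y 0 - (if e then 1 else 0) * coord x 0 * coord y 3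
  else if k == 4%N then coord x 2 * coord y 2 + 2 * coord x 4 * coord y 1
  else if (5 <= k)%N then coord x k.-1 * coord y 2 + (k%:R - 2) * coord x k * coord y 1
  else 0.

Lemma coord_bracketL A x y k : A <> RFn1 -> (k < n.+2)%N ->
  coord (bracket A x y) k = coordL (is_Lie1 A) x y k.
Proof.
move=> hA hk; rewrite /coordL.
have [k5|k5] := leqP 5 k.
  decide_ifs; case: A hA => // _; sum_on_support [:: (k.-1, 2); (k, 1)]%N;
    rewrite natrB; try lia; rewrite /coord; ring.
case: (ltngtP k 2) => [k2|k2|->].
- decide_ifs; case: A hA => // _; sum_on_support (@nil (nat * nat)).
- case: (ltngtP k 3) => [k3|k3|->].
  + lia.
  + decide_ifs; case: A hA => // _; sum_on_support [:: (2, 2); (4, 1)]%N;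
      rewrite ?natrB; try lia; rewrite /coord; ring.
  + case: A hA => // _; sum_on_support [:: (3, 0); (0, 3)]%N; rewrite /coord; ring.
- case: A hA => // _; sum_on_support [:: (2, 1); (1, 2)]%N; rewrite /coord; ring.
Qed.

(* [br A] does not compute for an abstract [A <> RFn1]; [brL] is its common value. *)
Definition brL (e : bool) (a b : nat) : V :=
  if (a == 2)%N && (b == 2)%N then bv R n 4
  else if (4 <= a <= n)%N && (b == 2)%N then bv R n a.+1
  else if (a == 2)%N && (b == 1)%N then bv R n 2
  else if (a == 1)%N && (b == 2)%N then - bv R n 2
  else if (a == 3)%N && (b == 0)%N then bv R n 3
  else if (a == 0)%N && (b == 3)%N then (if e then - bv R n 3 else 0)
  else if (4 <= a <= n.+1)%N && (b == 1)%N then (a - 2)%:R *: bv R n a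
  else 0.

Lemma br_Lie A a b : A <> RFn1 -> br R A n a b = brL (is_Lie1 A) a b.
Proof. by case: A. Qed.

End BracketFormulas.

Ltac der_identity dP a b k :=
  move: (coord_der_basis (a := a) (b := b) k dP ltac:(lia) ltac:(lia)).
Ltac antider_identity DP a b k :=
  move: (coord_antider_basis (a := a) (b := b) k DP ltac:(lia) ltac:(lia)).
Ltac compat_identity dD a b k :=
  move: (coord_compat_basis a b k dD).

Ltac expand_identity :=
  rewrite ?coord_bracketRF ?coord_bracketL; try (first [lia | assumption]);
  rewrite /coordRF /coordL; repeat (rewrite br_Lie; [|assumption]);
  rewrite /br /brL; decide_ifs;
  repeat (case: ifP => ?; try (exfalso; lia));
  repeat match goal with H : is_true (?x == ?y) |- _ =>
    is_var x; move/eqP: H => H; subst x end;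
  rewrite ?coord_bv_mul ?coord_scale_bv_mul ?coord_opp_bv_mul ?coord_0_mul;
  repeat (rewrite coord_bv; [|lia|lia]); decide_nat_eqs;
  rewrite /= ?mulr1n ?mulr0n ?mulr0 ?mul0r ?mulr1 ?mul1r ?addr0 ?add0r ?subr0 ?oppr0.

(* Once expanded, the basis identity at hand is [c] times the wanted equation. *)
Tactic Notation "solve_by_lincomb" uconstr(c) :=
  let E := fresh "E" in
  move=> E; refine (eq_of_lincomb (c := c) E _); rewrite ?natrB; try lia;
  first [ ring | field; rewrite ?subr_eq0 ?eqr_nat ?pnatr_eq0 ?oppr_eq0; lia ].

Ltac expand_witness coef :=
  rewrite /coordRF /coordL; decide_ifs; rewrite ?coord_row; try lia;
  repeat (rewrite coord_bv; [|lia|lia]); decide_nat_eqs; unfold coef; decide_ifs;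
  rewrite /= ?mulr1n ?mulr0n ?mulr0 ?mul0r ?mulr1 ?mul1r ?addr0 ?add0r ?subr0 ?oppr0;
  repeat (case: ifP => ?; try (exfalso; lia));
  repeat match goal with H : is_true (?x == ?y) |- _ =>
    is_var x; move/eqP: H => H; subst x end;
  decide_nat_eqs; rewrite ?mulr0 ?mul0r ?mul1r ?mulr1 ?oppr0 ?opprK ?addr0 ?add0r ?subr0 //.

Section RFn1.
Variables (R : realType) (n : nat) (d D : 'M[R[i]]_(n.+2)).
Hypothesis n_ge4 : (4 <= n)%N.
Hypothesis dP : is_derivation RFn1 d.
Hypothesis DP : is_antiderivation RFn1 D.
Hypothesis dD : forall x y, bracket RFn1 x (y *m d) = bracket RFn1 x (y *m D).
Local Notation C := (R[i]).
(* [dd i k] is the coordinate at position [k] of the image of the basis vector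
   at position [i].  Lemma names [d.._u_v] use the paper's names of these basis
   vectors, a bare [e] standing for a range of [e_i]. *)
Local Notation dd i k := (d (inord i) (inord k)).
Local Notation DD i k := (D (inord i) (inord k)).

Lemma dRF_e_low p k : (3 <= p <= n.+1)%N -> (k < 3)%N -> dd p k = 0.
Proof. by move=> hp hk; der_identity dP p 0%N k; expand_identity; solve_by_lincomb 1. Qed.

Lemma dRF_h1_h1h2 : dd 0 0 + dd 0 1 = 0.
Proof. by der_identity dP 3%N 0%N 3%N; expand_identity; solve_by_lincomb (-1). Qed.

Lemma dRF_h1_h2 : dd 0 1 = 0.
Proof.
have E : dd 0 0 + 2 * dd 0 1 = 0.
  by der_identity dP 4%N 0%N 4%N; expand_identity; solve_by_lincomb (-1).
rewrite (_ : dd 0 1 = (dd 0 0 + 2 * dd 0 1) - (dd 0 0 + dd 0 1)); last ring.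
by rewrite E dRF_h1_h1h2 subrr.
Qed.

Lemma dRF_h1_h1 : dd 0 0 = 0.
Proof. by have := dRF_h1_h1h2; rewrite dRF_h1_h2 addr0. Qed.

Lemma dRF_h1_e1 : dd 0 2 = 0.
Proof. by der_identity dP 3%N 0%N 4%N; expand_identity; solve_by_lincomb (-1). Qed.

Lemma dRF_h1_e k : (3 <= k <= n.+1)%N -> dd 0 k = 0.
Proof. by move=> hk; der_identity dP 0%N 0%N k; expand_identity; solve_by_lincomb (-1). Qed.

Lemma dRF_h2_e k : (3 <= k <= n.+1)%N -> dd 1 k = 0.
Proof. by move=> hk; der_identity dP 1%N 0%N k; expand_identity; solve_by_lincomb (-1). Qed.

Lemma dRF_e1_e k : (3 <= k <= n.+1)%N -> dd 2 k = 0.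
Proof. by move=> hk; der_identity dP 2%N 0%N k; expand_identity; solve_by_lincomb (-1). Qed.

Lemma dRF_e1_h1 : dd 2 0 = 0.
Proof. by der_identity dP 2%N 1%N 0%N; expand_identity; solve_by_lincomb 1. Qed.

Lemma dRF_e1_h2 : dd 2 1 = 0.
Proof. by der_identity dP 2%N 1%N 1%N; expand_identity; solve_by_lincomb 1. Qed.

Lemma dRF_h2_h2 : dd 1 1 = 0.
Proof. by der_identity dP 2%N 1%N 2%N; expand_identity; solve_by_lincomb (-1). Qed.

Lemma dRF_h2_h1 : dd 1 0 = 0.
Proof.
have E : dd 1 0 + dd 1 1 = 0.
  by der_identity dP 3%N 1%N 3%N; expand_identity; solve_by_lincomb (-1).
by rewrite dRF_h2_h2 addr0 in E.
Qed.

Lemma dRF_e_next p : (3 <= p <= n)%N -> dd p p.+1 = - dd 1 2.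
Proof. by move=> hp; der_identity dP p 1%N p.+1; expand_identity; solve_by_lincomb (-1). Qed.

Lemma dRF_e_offdiag p k : (3 <= p <= n.+1)%N -> (3 <= k <= n.+1)%N ->
  k != p -> k != p.+1 -> dd p k = 0.
Proof.
move=> hp hk kNp kNp1; der_identity dP p 1%N k; expand_identity.
all: solve_by_lincomb (p%:R - k%:R : C)^-1.
Qed.

Lemma dRF_e_diag p : (3 <= p <= n.+1)%N -> dd p p = dd 3 3 + (p%:R - 3) * dd 2 2.
Proof.
elim: p => [|p IH] hp; first lia.
have [->|p_ne2] := eqVneq p 2%N; first by rewrite subrr mul0r addr0.
have -> : dd p.+1 p.+1 = dd p p + dd 2 2.
  by der_identity dP p 2%N p.+1; expand_identity; solve_by_lincomb 1.
by rewrite IH; [ring | lia].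
Qed.

Lemma DRF_low b k : (b < n.+2)%N -> (k < 3)%N -> DD b k = dd b k.
Proof.
move=> hb hk.
have E1 : DD b 1 = dd b 1.
  by compat_identity dD 2%N b 2%N; expand_identity; solve_by_lincomb (-1).
have E01 : DD b 0 + DD b 1 = dd b 0 + dd b 1.
  by compat_identity dD 3%N b 3%N; expand_identity; solve_by_lincomb (-1).
case: k hk => [|[|[|]]] // _; first by move: E01; rewrite E1 => /addIr.
by compat_identity dD 3%N b 4%N; expand_identity; solve_by_lincomb (-1).
Qed.

Lemma DRF_e_e p k : (3 <= p <= n.+1)%N -> (3 <= k <= n.+1)%N -> DD p k = 0.
Proof. by move=> hp hk; antider_identity DP 0%N p k; expand_identity; solve_by_lincomb 1. Qed.

Lemma DRF_h2_e k : (3 <= k <= n.+1)%N -> DD 1 k = (k%:R - 2) * DD 0 k.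
Proof. by move=> hk; antider_identity DP 0%N 1%N k; expand_identity; solve_by_lincomb 1. Qed.

Lemma DRF_e1_e k : (4 <= k <= n.+1)%N -> DD 2 k = DD 0 k.-1.
Proof. by move=> hk; antider_identity DP 0%N 2%N k; expand_identity; solve_by_lincomb 1. Qed.

Lemma DRF_e1_e2 : DD 2 3 = 0.
Proof. by antider_identity DP 0%N 2%N 3%N; expand_identity; solve_by_lincomb 1. Qed.

(* The coordinates of the witness are forced: its [h]-part by the diagonal of
   [d] on [e_1, e_2], its [e_1]-part by [d h_2] and the rest by [D h_1]. *)
Definition xRF_coef (j : nat) : C :=
  if j == 0%N then dd 2 2 - dd 3 3 else if j == 1%N then - dd 2 2
  else if j == 2%N then dd 1 2 else DD 0 j.

Definition xRF : 'rV[C]_(n.+2) := \row_(j < n.+2) xRF_coef j.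

Lemma dRF_entry i k : (i < n.+2)%N -> (k < n.+2)%N -> dd i k = - coordRF (bv R n i) xRF k.
Proof.
move=> hi hk; have [i_lt3|i_ge3] := ltnP i 3.
  by case: i i_lt3 hi => [|[|[|i]]] // _ hi; case: k hk => [|[|[|k]]] hk;
    expand_witness xRF_coef;
    first [ exact: dRF_h1_h1 | exact: dRF_h1_h2 | exact: dRF_h1_e1 | exact: dRF_h2_h1
          | exact: dRF_h2_h2 | exact: dRF_e1_h1 | exact: dRF_e1_h2
          | apply: dRF_h1_e; lia | apply: dRF_h2_e; lia | apply: dRF_e1_e; lia ].
have [k_lt3|k_ge3] := ltnP k 3; first by rewrite dRF_e_low; try lia; expand_witness xRF_coef.
have [->|kNi] := eqVneq k i; first by rewrite dRF_e_diag; try lia; expand_witness xRF_coef; ring.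
have [k_next|kNi1] := eqVneq k i.+1; first by subst k; rewrite dRF_e_next; try lia; expand_witness xRF_coef.
by rewrite dRF_e_offdiag; try lia; expand_witness xRF_coef.
Qed.

Lemma DRF_entry i k : (i < n.+2)%N -> (k < n.+2)%N -> DD i k = coordRF xRF (bv R n i) k.
Proof.
move=> hi hk; have [k_lt3|k_ge3] := ltnP k 3.
  rewrite DRF_low // dRF_entry //.
  by case: k k_lt3 hk => [|[|[|]]] // _ hk; expand_witness xRF_coef; ring.
case: i hi => [|[|[|i]]] hi.
- by expand_witness xRF_coef; rewrite mulr1.
- by rewrite DRF_h2_e; try lia; expand_witness xRF_coef; ring.
- have [->|kN3] := eqVneq k 3%N; first by rewrite DRF_e1_e2; expand_witness xRF_coef.
  by rewrite DRF_e1_e; try lia; expand_witness xRF_coef.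
- by rewrite DRF_e_e; try lia; expand_witness xRF_coef.
Qed.

Lemma RFn1_biderivation_inner : is_inner_biderivation RFn1 d D.
Proof.
apply: (inner_of_entries (x := xRF)) => i k hi hk; rewrite coord_bracketRF //; try lia.
- exact: dRF_entry.
- exact: DRF_entry.
Qed.

End RFn1.

Section Lie.
Variables (R : realType) (n : nat) (A : which_alg) (d D : 'M[R[i]]_(n.+2)).
Hypothesis n_ge4 : (4 <= n)%N.
Hypothesis A_Lie : A <> RFn1.
Hypothesis dP : is_derivation A d.
Hypothesis DP : is_antiderivation A D.
Hypothesis dD : forall x y, bracket A x (y *m d) = bracket A x (y *m D).
Local Notation C := (R[i]).
Local Notation dd i k := (d (inord i) (inord k)).
Local Notation DD i k := (D (inord i) (inord k)).

Lemma dL_e2_offdiag k : (k < n.+2)%N -> k != 3%N -> dd 3 k = 0.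
Proof. by move=> hk kN3; der_identity dP 3%N 0%N k; expand_identity; solve_by_lincomb 1. Qed.

Lemma dL_h1_h1 : dd 0 0 = 0.
Proof. by der_identity dP 3%N 0%N 3%N; expand_identity; solve_by_lincomb (-1). Qed.

Lemma dL_h1_e2 : ~~ is_Lie1 A -> dd 0 3 = 0.
Proof. by move/negbTE=> notL1; der_identity dP 0%N 0%N 3%N; expand_identity; solve_by_lincomb (-1). Qed.

Lemma dL_e_low p k : (4 <= p <= n.+1)%N -> (k < 4)%N -> dd p k = 0.
Proof.
move=> hp hk; der_identity dP p 1%N k; expand_identity.
all: first [solve_by_lincomb (p%:R - 3 : C)^-1 | solve_by_lincomb (p%:R - 2 : C)^-1].
Qed.

Lemma dL_e_next p : (4 <= p <= n)%N -> dd p p.+1 = - dd 1 2.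
Proof. by move=> hp; der_identity dP p 1%N p.+1; expand_identity; solve_by_lincomb (-1). Qed.

Lemma dL_e_offdiag p k : (4 <= p <= n.+1)%N -> (4 <= k <= n.+1)%N ->
  k != p -> k != p.+1 -> dd p k = 0.
Proof.
move=> hp hk kNp kNp1; der_identity dP p 1%N k; expand_identity.
all: first [solve_by_lincomb (p%:R - 4 : C)^-1 | solve_by_lincomb (p%:R - k%:R : C)^-1].
Qed.

Lemma dL_h2_h2 : dd 1 1 = 0.
Proof. by der_identity dP 4%N 1%N 4%N; expand_identity; solve_by_lincomb (- 2^-1 : C). Qed.

Lemma dL_e1_low k : (k < 4)%N -> k != 2%N -> dd 2 k = 0.
Proof. by move=> hk kN2; der_identity dP 2%N 1%N k; expand_identity; solve_by_lincomb 1. Qed.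

Lemma dL_e1_e3 : dd 2 4 = - dd 1 2.
Proof. by der_identity dP 2%N 1%N 4%N; expand_identity; solve_by_lincomb (-1). Qed.

Lemma dL_e1_e k : (5 <= k <= n.+1)%N -> dd 2 k = 0.
Proof.
move=> hk; der_identity dP 2%N 1%N k; expand_identity.
all: solve_by_lincomb (3 - k%:R : C)^-1.
Qed.

Lemma dL_h1_e1 : dd 0 2 = 0.
Proof. by der_identity dP 0%N 1%N 2%N; expand_identity; solve_by_lincomb (-1). Qed.

Lemma dL_h1_e k : (4 <= k <= n.+1)%N -> dd 0 k = 0.
Proof.
move=> hk; der_identity dP 0%N 1%N k; expand_identity.
all: first [solve_by_lincomb (- 2^-1 : C) | solve_by_lincomb (- (k%:R - 2 : C)^-1)].
Qed.

Lemma dL_h1_h2 : dd 0 1 = 0.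
Proof. by der_identity dP 0%N 2%N 2%N; expand_identity; solve_by_lincomb 1. Qed.

Lemma dL_h2_h1 : dd 1 0 = 0.
Proof. by der_identity dP 3%N 1%N 3%N; expand_identity; solve_by_lincomb (-1). Qed.

Lemma dL_h2_e2 : dd 1 3 = 0.
Proof. by der_identity dP 1%N 0%N 3%N; expand_identity; solve_by_lincomb (-1). Qed.

Lemma dL_h2_e k : (4 <= k <= n.+1)%N -> dd 1 k = 0.
Proof.
move=> hk; der_identity dP 1%N 1%N k; expand_identity.
all: first [solve_by_lincomb (- 2^-1 : C) | solve_by_lincomb (- (k%:R - 2 : C)^-1)].
Qed.

Lemma dL_e_diag p : (4 <= p <= n.+1)%N -> dd p p = (p%:R - 2) * dd 2 2.
Proof.
elim: p => [|p IH] hp; first lia.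
have [->|p_ne3] := eqVneq p 3%N.
  rewrite (_ : dd 4 4 = 2 * dd 2 2); first ring.
  by der_identity dP 2%N 2%N 4%N; expand_identity; solve_by_lincomb 1.
have -> : dd p.+1 p.+1 = dd p p + dd 2 2.
  by der_identity dP p 2%N p.+1; expand_identity; solve_by_lincomb 1.
by rewrite IH; [ring | lia].
Qed.

Lemma DL_low b k : (b < n.+2)%N -> (k < 3)%N -> DD b k = dd b k.
Proof.
move=> hb; case: k => [|[|[|]]] // _.
- by compat_identity dD 3%N b 3%N; expand_identity; solve_by_lincomb (-1).
- by compat_identity dD 2%N b 2%N; expand_identity; solve_by_lincomb (-1).
- by compat_identity dD 2%N b 4%N; expand_identity; solve_by_lincomb (-1).
Qed.

Lemma DL_col_e2 b : (b < n.+2)%N -> is_Lie1 A -> DD b 3 = dd b 3.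
Proof. by move=> hb L1; compat_identity dD 0%N b 3%N; expand_identity; solve_by_lincomb 1. Qed.

Lemma DL_e_e p k : (4 <= p <= n.+1)%N -> (4 <= k <= n.+1)%N -> DD p k = 0.
Proof.
move=> hp hk; antider_identity DP 1%N p k; expand_identity.
all: first [solve_by_lincomb (2^-1 : C) | solve_by_lincomb (k%:R - 2 : C)^-1].
Qed.

Lemma DL_e_e2 p : (4 <= p <= n.+1)%N -> DD p 3 = 0.
Proof. by move=> hp; antider_identity DP 0%N p 3%N; expand_identity; solve_by_lincomb 1. Qed.

Lemma DL_e2_e k : (4 <= k <= n.+1)%N -> DD 3 k = 0.
Proof.
move=> hk; antider_identity DP 1%N 3%N k; expand_identity.
all: first [solve_by_lincomb (2^-1 : C) | solve_by_lincomb (k%:R - 2 : C)^-1].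
Qed.

Lemma DL_e2_e2 : ~~ is_Lie1 A -> DD 3 3 = 0.
Proof. by move/negbTE=> notL1; antider_identity DP 0%N 3%N 3%N; expand_identity; solve_by_lincomb 1. Qed.

Lemma DL_h1_e k : (4 <= k <= n.+1)%N -> DD 0 k = 0.
Proof.
move=> hk; antider_identity DP 0%N 1%N k; expand_identity.
all: first [solve_by_lincomb (- 2^-1 : C) | solve_by_lincomb (- (k%:R - 2 : C)^-1)].
Qed.

Lemma DL_h2_e2 : DD 1 3 = 0.
Proof. by antider_identity DP 0%N 1%N 3%N; expand_identity; solve_by_lincomb 1. Qed.

Lemma DL_e1_e2 : DD 2 3 = 0.
Proof. by antider_identity DP 1%N 2%N 3%N; expand_identity; solve_by_lincomb (-1). Qed.

Lemma DL_e1_e3 : DD 2 4 = DD 1 2.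
Proof. by antider_identity DP 1%N 2%N 4%N; expand_identity; solve_by_lincomb 1. Qed.

Lemma DL_e1_e k : (5 <= k <= n.+1)%N -> DD 2 k = DD 1 k.-1 / (k%:R - 3).
Proof.
move=> hk; antider_identity DP 1%N 2%N k; expand_identity.
all: first [solve_by_lincomb (k%:R - 3 : C)^-1 | solve_by_lincomb (- (k%:R - 3 : C)^-1)].
Qed.

(* The [h]-part of the witness is forced by the diagonal of [d] on [e_1, e_2],
   its [e_1]-part by [d h_2], its [e_2]-part by [D h_1] and the rest by [D h_2]. *)
Definition xL_coef (j : nat) : C :=
  if j == 0%N then - dd 3 3 else if j == 1%N then - dd 2 2
  else if j == 2%N then dd 1 2 else if j == 3%N then DD 0 3 else DD 1 j / (j%:R - 2).

Definition xL : 'rV[C]_(n.+2) := \row_(j < n.+2) xL_coef j.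

Lemma dL_entry i k : (i < n.+2)%N -> (k < n.+2)%N ->
  dd i k = - coordL (is_Lie1 A) (bv R n i) xL k.
Proof.
move=> hi hk; have [i_ge4|i_lt4] := leqP 4 i.
  have [k_lt4|k_ge4] := ltnP k 4; first by rewrite dL_e_low; try lia; expand_witness xL_coef.
  have [->|kNi] := eqVneq k i; first by rewrite dL_e_diag; try lia; expand_witness xL_coef; ring.
  have [k_next|kNi1] := eqVneq k i.+1; first by subst k; rewrite dL_e_next; try lia; expand_witness xL_coef.
  by rewrite dL_e_offdiag; try lia; expand_witness xL_coef.
case: i i_lt4 hi => [|[|[|[|i]]]] // _ hi.
- by case: k hk => [|[|[|[|k]]]] hk; expand_witness xL_coef;
    first [ exact: dL_h1_h1 | exact: dL_h1_h2 | exact: dL_h1_e1 | by rewrite DL_col_e2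
          | by apply/dL_h1_e2/negbT | apply: dL_h1_e; lia ].
- by case: k hk => [|[|[|[|k]]]] hk; expand_witness xL_coef;
    first [ exact: dL_h2_h1 | exact: dL_h2_h2 | exact: dL_h2_e2 | apply: dL_h2_e; lia ].
- by case: k hk => [|[|[|[|[|k]]]]] hk; expand_witness xL_coef;
    first [ by apply: dL_e1_low | exact: dL_e1_e3 | apply: dL_e1_e; lia ].
- have [->|kN3] := eqVneq k 3%N; first by expand_witness xL_coef.
  by rewrite dL_e2_offdiag //; expand_witness xL_coef.
Qed.

Lemma DL_entry i k : (i < n.+2)%N -> (k < n.+2)%N ->
  DD i k = coordL (is_Lie1 A) xL (bv R n i) k.
Proof.
move=> hi hk; have [k_lt3|k_ge3] := ltnP k 3.
  rewrite DL_low // dL_entry //.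
  by case: k k_lt3 hk => [|[|[|]]] // _ hk; expand_witness xL_coef; ring.
case: i hi => [|[|[|[|i]]]] hi.
- by case: k k_ge3 hk => [|[|[|[|k]]]] // _ hk; expand_witness xL_coef;
    apply: DL_h1_e; lia.
- by case: k k_ge3 hk => [|[|[|[|[|k]]]]] // _ hk; expand_witness xL_coef;
    first [ exact: DL_h2_e2 | field; rewrite ?subr_eq0 -?natrD ?eqr_nat; lia ].
- by case: k k_ge3 hk => [|[|[|[|[|k]]]]] // _ hk; expand_witness xL_coef;
    first [ exact: DL_e1_e2 | by rewrite DL_e1_e3 DL_low
          | rewrite DL_e1_e /=; [field; rewrite ?subr_eq0 -?natrD ?eqr_nat; lia | lia] ].
- by case: k k_ge3 hk => [|[|[|[|k]]]] // _ hk; expand_witness xL_coef;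
    first [ by rewrite DL_col_e2 | by apply/DL_e2_e2/negbT | apply: DL_e2_e; lia ].
- have [->|kN3] := eqVneq k 3%N; first by rewrite DL_e_e2; try lia; expand_witness xL_coef.
  by rewrite DL_e_e; try lia; expand_witness xL_coef.
Qed.

Lemma Lie_biderivation_inner : is_inner_biderivation A d D.
Proof.
apply: (inner_of_entries (x := xL)) => i k hi hk; rewrite coord_bracketL //; try lia.
- exact: dL_entry.
- exact: DL_entry.
Qed.

End Lie.

Theorem mainTheorem14 (R : realType) (A : which_alg) (n : nat) (hn : (4 <= n)%N)
  (d D : 'M[R[i]]_(n.+2)) :
  is_biderivation A d D -> is_inner_biderivation A d D.
Proof.
case=> dP DP dD; case: A dP DP dD => dP DP dD.
- exact: RFn1_biderivation_inner hn dP DP dD.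
- exact: Lie_biderivation_inner.
- exact: Lie_biderivation_inner.
Qed.
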